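(* Let $\mathcal{L}$ be a Lie algebra and let $(U,\rho)$ be a finite-dimensional representation of $\mathcal{L}$. Suppose $x,y_1,y_2,\ldots\in\mathcal{L}$ satisfy $[x,y_k]=\nu_ky_k$ with $\nu_k\in\mathbb{C}$ for $k=1,2,\ldots$. Then the set $\{\nu_k:\rho(y_k)\neq 0\}$ has at most $(\dim U)^2-\dim U+1$ distinct elements. *)

(* The complex field is  R[i] = complex R  for a realType R
   (mathcomp-real-closed's complex numbers over the reals). *)
From HB Require Import structures.
From mathcomp Require Import all_boot all_order all_algebra.
From mathcomp Require Import reals.
From mathcomp.real_closed Require Export complex.
Set Implicit Arguments. Unset Strict Implicit. Unset Printing Implicit Defensive.
Import Order.TTheory GRing.Theory Num.Theory.
Local Open Scope ring_scope.

Definition is_lie_bracket (F : fieldType) (L : lmodType F) (br : L -> L -> L) :=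
  [/\ (forall (a : F) (x y z : L), br (a *: x + y) z = a *: br x z + br y z),
      (forall (a : F) (x y z : L), br z (a *: x + y) = a *: br z x + br z y),
      (forall x : L, br x x = 0) &
      (forall x y z : L, br x (br y z) + br y (br z x) + br z (br x y) = 0)].

Definition is_lie_rep (F : fieldType) (L : lmodType F) (br : L -> L -> L)
  (n : nat) (rho : L -> 'M[F]_n) :=
  (forall (a : F) (x y : L), rho (a *: x + y) = a *: rho x + rho y) /\
  (forall x y : L, rho (br x y) = rho x *m rho y - rho y *m rho x).

From HB Require Import structures.
From mathcomp Require Import all_boot all_order all_algebra zify.
From mathcomp Require Import reals.
From mathcomp.real_closed Require Import complex.
Import Order.TTheory GRing.Theory Num.Theory.
Local Open Scope ring_scope.
Local Open Scope complex_scope.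

(* If [x, y] = nu y, then X := rho x and A := rho y satisfy A X = (X - nu) A,
   hence A p(X) = p(X - nu) A for every polynomial p.  Taking for p the
   characteristic polynomial of X gives p(X - nu) A = 0, so when A != 0 some
   factor X - nu - z of p(X - nu) is singular: nu = (nu + z) - z is a
   difference of two eigenvalues of X.  An n x n matrix has at most n
   eigenvalues, which have at most n (n - 1) nonzero differences. *)

Lemma size_uniq_sub_differences {V : zmodType} (S s : seq V) :
  uniq s -> {subset s <= [seq c - z | c <- S, z <- S]} ->
  (size s <= size S ^ 2 - size S + 1)%N.
Proof.
move=> uniq_s s_diff; set U := undup S.
have s_sub : {subset s <= 0 :: [seq c - z | c <- U, z <- rem c U]}.
  move=> _ /s_diff /allpairsP [[c z] [/= cS zS ->]].
  have [->|zNc] := eqVneq z c; first by rewrite subrr mem_head.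
  rewrite inE; apply/orP; right; apply/allpairsPdep; exists c, z.
  by rewrite (mem_rem_uniq _ (undup_uniq S)) inE /= zNc !mem_undup cS zS.
have /all_pred1P size_rems :
    all (pred1 (size U).-1) [seq size (rem c U) | c <- U].
  by apply/allP => _ /mapP [c cU ->]; rewrite /= size_rem.
have := uniq_leq_size uniq_s s_sub.
rewrite /= size_allpairs_dep size_rems size_map sumn_nseq.
have := size_undup S; rewrite -/U; move: (size U) (size S) (size s); nia.
Qed.

Lemma char_poly_split {F : closedFieldType} {n} (A : 'M[F]_n) :
  {rs : seq F | char_poly A = \prod_(z <- rs) ('X - z%:P) & size rs = n}.
Proof.
have [rs chA] := closed_field_poly_normal (char_poly A).
rewrite (monicP (char_poly_monic A)) scale1r in chA.
exists rs => //; apply: succn_inj.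
by rewrite -(size_prod_XsubC rs id) -chA size_char_poly.
Qed.

Lemma horner_mx_intertwine {R : comNzRingType} {m n} {X : 'M[R]_n.+1}
    {B : 'M[R]_m.+1} {A : 'M[R]_(m.+1, n.+1)} (p : {poly R}) :
  A *m X = B *m A -> A *m horner_mx X p = horner_mx B p *m A.
Proof.
move=> AX_BA; elim/poly_ind: p => [|p c IHp].
  by rewrite !rmorph0 mulmx0 mul0mx.
rewrite !rmorphD !rmorphM /= !horner_mx_X !horner_mx_C mulmxDr mulmxDl.
by rewrite -!mulmxE mulmxA IHp -!mulmxA AX_BA scalar_mxC.
Qed.

Lemma intertwiner_common_eigenvalue {F : closedFieldType} {m n} {X : 'M[F]_n}
    {B : 'M[F]_m} {A : 'M[F]_(m, n)} :
  A *m X = B *m A -> A != 0 -> exists2 z, eigenvalue X z & eigenvalue B z.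
Proof.
case: m B A => [|m] B A; first by rewrite (flatmx0 A) eqxx.
case: n X A => [|n] X A; first by rewrite (thinmx0 A) eqxx.
move=> AX_BA nzA; have [rs chX _] := char_poly_split X.
have prodA0 : (\prod_(z <- rs) (B - z%:M)) *m A = 0.
  have <- : horner_mx B (char_poly X) = \prod_(z <- rs) (B - z%:M).
    rewrite chX rmorph_prod; apply: eq_bigr => z _.
    by rewrite rmorphB /= horner_mx_X horner_mx_C.
  by rewrite -(horner_mx_intertwine _ AX_BA) Cayley_Hamilton mulmx0.
have /allPn [z z_rs singBz] : ~~ all (fun z => B - z%:M \in unitmx) rs.
  apply: contra nzA => /allP unitBz.
  have unit_prod : \prod_(z <- rs) (B - z%:M) \in unitmx.
    rewrite big_seq; apply: (big_ind (fun P => P \in unitmx)).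
    - exact: unitmx1.
    - by move=> P Q uP uQ; rewrite -mulmxE unitmx_mul uP.
    - by move=> z /unitBz.
  by rewrite -(mulKmx unit_prod A) prodA0 mulmx0.
exists z; first by rewrite eigenvalue_root_char chX root_prod_XsubC.
by rewrite /eigenvalue /eigenspace kermx_eq0 row_free_unit.
Qed.

Lemma ad_eigenvector_eigenvalue_shift {F : closedFieldType} {n}
    {X A : 'M[F]_n} {nu} :
  X *m A - A *m X = nu *: A -> A != 0 ->
  exists2 z, eigenvalue X z & eigenvalue X (nu + z).
Proof.
move=> adA nzA.
have AX_BA : A *m X = (X - nu%:M) *m A.
  by rewrite mulmxBl mul_scalar_mx -adA opprB addrC subrK.
have [z eigXz] := intertwiner_common_eigenvalue AX_BA nzA.
by exists z => //; rewrite /eigenvalue /eigenspace raddfD /= opprD addrA.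
Qed.

Theorem lemma2 (R : realType) (L : lmodType R[i]) (br : L -> L -> L)
  (n : nat) (rho : L -> 'M[R[i]]_n)
  (x : L) (y : nat -> L) (nu : nat -> R[i]) :
  is_lie_bracket br -> is_lie_rep br rho ->
  (forall k : nat, br x (y k) = nu k *: y k) ->
  forall s : seq R[i], uniq s ->
    (forall v, v \in s -> exists k : nat, nu k = v /\ rho (y k) != 0) ->
    (size s <= n ^ 2 - n + 1)%N.
Proof.
move=> _ [rho_lin rho_br] ad_y s uniq_s s_nu.
have rhoZ : scalable rho := scalable_linear rho_lin.
have [rs chX size_rs] := char_poly_split (rho x).
rewrite -size_rs; apply: size_uniq_sub_differences uniq_s _.
move=> _ /s_nu [k [<- nz_yk]].
have ad_yk : rho x *m rho (y k) - rho (y k) *m rho x = nu k *: rho (y k).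
  by rewrite -rho_br ad_y rhoZ.
have [z eig_z eig_nuz] := ad_eigenvector_eigenvalue_shift ad_yk nz_yk.
have eig_rs c : eigenvalue (rho x) c -> c \in rs.
  by rewrite eigenvalue_root_char chX root_prod_XsubC.
apply/allpairsP; exists (nu k + z, z); split=> /=.
- exact: eig_rs eig_nuz.
- exact: eig_rs eig_z.
- by rewrite addrK.
Qed.
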